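(* Let $f$ be a function of unitation on $\{0,1\}^n$ and let $\sigma=1$, $\kappa\in\mathbb{N}$ and $\mu\geq (n+1)\cdot\kappa$. Then the expected optimisation time of the $(\mu+1)$ EA with phenotypic clearing with clearing radius $\sigma$, niche capacity $\kappa$ and population size $\mu$ on $f$ is $O(\mu n\log n)$.
   Context: A function of unitation is $f:\{0,1\}^n\to\mathbb{R}$ with $f(x)=u(|x|_1)$ for some $u:\{0,\dots,n\}\to\mathbb{R}^+$, where $|x|_1$ is the number of 1-bits of $x$; fitness values are assumed positive. The optimisation time is the number of generations until a global maximum of $f$ is found. The $(\mu+1)$ EA with clearing (population size $\mu$, clearing radius $\sigma$, niche capacity $\kappa$, distance function $\mathrm{d}$): $P_0$ consists of $\mu$ bit strings chosen independently and uniformly at random. In generation $t$: choose a parent $x\in P_t$ uniformly at random; create $y$ by flipping each bit of $x$ independently with probability $1/n$; let $P_t^*=P_t\cup\{y\}$; update the fitness values of $P_t^*$ by the clearing procedure: sort $P_t^*$ by decreasing fitness; for $i=1,\dots,|P_t^*|$, if the current fitness of $P[i]$ is positive, set $w:=1$ and for $j=i+1,\dots,|P_t^*|$: if the current fitness of $P[j]$ is positive and $\mathrm{d}(P[i],P[j])<\sigma$ then, if $w<\kappa$ set $w:=w+1$, else set the fitness of $P[j]$ to $0$. Individuals whose fitness is not reset are winners, the others are cleared. Then choose $z\in P_t$ with worst (cleared) fitness uniformly at random; if the (cleared) fitness of $y$ is at least that of $z$, set $P_{t+1}=P_t^*\setminus\{z\}$, otherwise $P_{t+1}=P_t^*\setminus\{y\}$.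 Phenotypic clearing uses $\mathrm{d}(x,y)=\big||x|_1-|y|_1\big|$. *)

From HB Require Import structures.
From mathcomp Require Import all_boot all_order all_algebra.
From mathcomp Require Import Rstruct.
From Stdlib Require Reals.
From Stdlib Require Import Rdefinitions.

Set Implicit Arguments.
Unset Strict Implicit.
Unset Printing Implicit Defensive.

Import Order.TTheory GRing.Theory Num.Theory.
Local Open Scope ring_scope.

Definition bits (n : nat) := n.-tuple bool.

Definition ones {n} (x : bits n) : nat := count id x.

Definition hamming {n} (x y : bits n) : nat :=
  count id [seq p.1 != p.2 | p <- zip x y].

(* Standard bit mutation with rate 1/n: probability that x is mutated into y. *)
Definition mutprob {n} (x y : bits n) : R :=
  (n%:R^-1) ^+ hamming x y * (1 - n%:R^-1) ^+ (n - hamming x y).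

Definition unit_fun {n} (u : nat -> R) (x : bits n) : R := u (ones x).

Definition pheno_dist {n} (x y : bits n) : R := `|(ones x)%:R - (ones y)%:R|.

(* The clearing procedure, for an indexed (multi)set Q : 'I_m -> T, fitness
   fit, distance d, radius sigma, capacity kappa, and an ordering [ord] of the
   indices (the result of sorting by decreasing fitness). *)
Section Clearing.
Variables (T : Type) (m : nat) (fit : T -> R) (d : T -> T -> R)
          (sigma : R) (kappa : nat) (Q : 'I_m -> T).

Definition clear_inner (i : 'I_m) (js : seq 'I_m) (cf : {ffun 'I_m -> R})
  : {ffun 'I_m -> R} :=
  (foldl (fun (st : nat * {ffun 'I_m -> R}) (j : 'I_m) =>
     let: (w, c) := st in
     if (0 < c j) && (d (Q i) (Q j) < sigma) then
       if leq w.+1 kappa then (w.+1, c)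
       else (w, [ffun k => if k == j then 0 else c k])
     else st) (1%N, cf) js).2.

Fixpoint clear_outer (ord : seq 'I_m) (cf : {ffun 'I_m -> R})
  : {ffun 'I_m -> R} :=
  match ord with
  | [::] => cf
  | i :: rest =>
      clear_outer rest (if 0 < cf i then clear_inner i rest cf else cf)
  end.

Definition clearing (ord : seq 'I_m) : {ffun 'I_m -> R} :=
  clear_outer ord [ffun k => fit (Q k)].

End Clearing.

Section EA.
Variables (n mu kappa : nat) (u : nat -> R).
Let f := @unit_fun n u.

(* populations: mu bit strings (an indexed multiset) *)
Definition pop := {ffun 'I_mu -> bits n}.
Definition xpop := {ffun 'I_mu.+1 -> bits n}.

(* P_t^* = P_t u {y}; the offspring y sits at index ord_max *)
Definition extend (P : pop) (y : bits n) : xpop :=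
  [ffun k : 'I_mu.+1 => if unlift ord_max k is Some j then P j else y].

Definition lft (j : 'I_mu) : 'I_mu.+1 := widen_ord (leqnSn mu) j.

(* A tie-breaking rule for "sort P_t^* by decreasing fitness": any ordering of
   the indices that is sorted by decreasing fitness. *)
Definition valid_sort (tb : xpop -> seq 'I_mu.+1) : Prop :=
  forall Q : xpop,
    perm_eq (tb Q) (enum 'I_mu.+1) /\
    sorted (fun i j => f (Q j) <= f (Q i)) (tb Q).

Variable tb : xpop -> seq 'I_mu.+1.

Definition cleared (P : pop) (y : bits n) : {ffun 'I_mu.+1 -> R} :=
  clearing f pheno_dist 1 kappa (extend P y) (tb (extend P y)).

Definition worst (P : pop) (y : bits n) : {set 'I_mu} :=
  [set j : 'I_mu | [forall k : 'I_mu,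
       cleared P y (lft j) <= cleared P y (lft k)]].

Definition next (P : pop) (y : bits n) (z : 'I_mu) : pop :=
  if cleared P y (lft z) <= cleared P y ord_max
  then [ffun k => if k == z then y else P k]
  else P.

Definition kernel (P P' : pop) : R :=
  \sum_(i : 'I_mu) mu%:R^-1 *
   \sum_(y : bits n) mutprob (P i) y *
    \sum_(z in worst P y) (#|worst P y|%:R)^-1 * (P' == next P y z)%:R.

Definition init (P : pop) : R := \prod_(j < mu) ((2 ^ n)%:R)^-1.

Definition is_opt (x : bits n) : bool := [forall y : bits n, f y <= f x].
Definition has_opt (P : pop) : bool := [exists j, is_opt (P j)].

(* q t P = Pr[ P_t = P and no global optimum in P_0, ..., P_t ] *)
Fixpoint q (t : nat) : {ffun pop -> R} :=
  match t with
  | 0 => [ffun P => if has_opt P then 0 else init P]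
  | t'.+1 => [ffun P' => if has_opt P' then 0
                         else \sum_(P : pop) q t' P * kernel P P']
  end.

(* Pr[T > t], T = optimisation time *)
Definition tail_prob (t : nat) : R := \sum_(P : pop) q t P.

(* sum_{t < N} Pr[T > t]; E[T] = sup_N of this *)
Definition partial_expect (N : nat) : R := \sum_(t < N) tail_prob t.

End EA.

From Stdlib Require Import Rdefinitions Rtrigo_def Exp_prop Rpower.
From Pilot Require Import Defs.
From HB Require Import structures.
From mathcomp Require Import all_boot all_order all_algebra.
From mathcomp Require Import Rstruct ring lra zify.
Import Order.TTheory GRing.Theory Num.Theory.
Set Implicit Arguments.
Unset Strict Implicit.
Unset Printing Implicit Defensive.
Local Open Scope ring_scope.

(* Phenotypic clearing with radius 1 splits the population into the n + 1 niches of equal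
   unitation, each of which keeps at most kappa winners.  Since mu + 1 > (n + 1) kappa, some
   niche of P_t + {y} is overfull, so a worst individual after clearing has cleared fitness 0 and
   therefore shares its niche with another individual: replacement never empties a niche,
   whereas an offspring in a new niche is a winner and always gets in.  Let l* be an optimal
   unitation and k > 0 the distance from the population to l*.  Choosing a closest parent and
   flipping exactly one of its at least k bits that point towards l* creates a closer niche;
   this happens with probability at least k * beta, beta = (1/n) (1 - 1/n)^(n-1) / mu.  Hence
   the potential G(k) = sum_(i <= k) 1 / (i beta) decreases by at least 1 in expectation in
   every generation, and additive drift bounds the expected optimisation time by
   G(n) = H_n / beta <= 6 mu n ln n. *)

Local Arguments exp x%_ring_scope.
Local Arguments ln x%_ring_scope.

Lemma exp_gt0 (x : R) : 0 < exp x.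
Proof. by apply/RltP; apply: exp_pos. Qed.

Lemma exp_ge1Dx (x : R) : 1 + x <= exp x.
Proof. by apply/RleP; apply: exp_ineq1_le. Qed.

Lemma expN (x : R) : exp (- x) = (exp x)^-1.
Proof.
apply: (@mulfI _ (exp x)); first by rewrite gt_eqF ?exp_gt0.
rewrite mulfV ?gt_eqF ?exp_gt0 //.
by rewrite (expRD x (- x) : _ = exp (x - x)) subrr expR0.
Qed.

Lemma ler_ln (x y : R) : 0 < x -> x <= y -> ln x <= ln y.
Proof.
move=> /RltP x0; rewrite le_eqVlt => /orP[/eqP-> //|/RltP xy].
by apply/ltW/RltP; apply: ln_increasing.
Qed.

Lemma lnM (x y : R) : 0 < x -> 0 < y -> ln (x * y) = ln x + ln y.
Proof. by move=> /RltP x0 /RltP y0; apply: ln_mult. Qed.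

Lemma invSn_le_lnS (k : nat) : (0 < k)%N -> (k.+1%:R)^-1 <= ln (k.+1)%:R - ln (k%:R).
Proof.
move=> k0; set x := (k.+1%:R : R)^-1.
have k1_gt0 : 0 < k.+1%:R :> R by rewrite ltr0n.
have k_le : k%:R <= k.+1%:R * exp (- x).
  have -> : (k%:R : R) = k.+1%:R * (1 - x).
    by rewrite /x mulrBr mulfV ?gt_eqF // mulr1 -natr1 addrK.
  by apply: ler_wpM2l; [exact: ltW | exact: exp_ge1Dx].
have := ler_ln (_ : 0 < k%:R) k_le; rewrite ltr0n => /(_ k0).
rewrite lnM ?exp_gt0 // ln_exp; lra.
Qed.

Lemma harmonic_le_1Dln (n : nat) : (0 < n)%N -> \sum_(i < n) (i.+1%:R : R)^-1 <= 1 + ln (n%:R).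
Proof.
elim: n => // [[_ _|n IH _]]; first by rewrite big_ord1 invr1 ln_1 addr0.
rewrite big_ord_recr /=.
have := IH isT; have := @invSn_le_lnS n.+1 isT.
move: (_^-1) (\sum_(i < _) _) (ln _) (ln _) => a b c d; lra.
Qed.

Lemma ln3_ge1 : 1 <= ln (3%:R).
Proof.
rewrite -[1 in X in X <= _](ln_exp 1); apply: ler_ln; first exact: exp_gt0.
by apply/RleP; apply: exp_le_3.
Qed.

Lemma one_subV_expn_ge (n : nat) : (1 < n)%N -> 3%:R^-1 <= (1 - (n%:R : R)^-1) ^+ n.-1.
Proof.
move=> n1; set m := n.-1.
have m_gt0 : 0 < m%:R :> R by rewrite ltr0n /m -ltnS prednK // ltnW.
have nE : (n%:R : R) = m%:R + 1 by rewrite /m natr1 prednK // ltnW.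
have step : exp (- m%:R^-1) <= 1 - n%:R^-1.
  have -> : 1 - n%:R^-1 = (1 + m%:R^-1)^-1 :> R.
    by rewrite nE; field; rewrite !gt_eqF // addr_gt0.
  rewrite expN lef_pV2 ?posrE ?exp_gt0 //; first exact: exp_ge1Dx.
  by rewrite ltr_wpDr ?invr_ge0 ?ltW.
apply: (@le_trans _ _ (exp (- m%:R^-1) ^+ m)).
  rewrite (expRX _ m : _ = exp (- m%:R^-1 *+ m)) mulNrn.
  rewrite -[m%:R^-1 *+ m]mulr_natr mulVf ?gt_eqF //.
  rewrite expN lef_pV2 ?posrE ?exp_gt0 ?ltr0n //.
  by apply/RleP; apply: exp_le_3.
apply: lerXn2r => //; rewrite nnegrE ltW ?exp_gt0 //.
exact: lt_le_trans (exp_gt0 _) step.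
Qed.

Lemma count_enumE (T : finType) (a : pred T) : count a (enum T) = #|a|.
Proof.
rewrite cardE -size_filter /enum_mem -filter_predI; congr size.
by apply: eq_filter => x /=; rewrite andbT.
Qed.

Lemma overfull_niche (I : finType) (kappa n : nat) (niche : I -> nat) :
  (forall i, niche i <= n)%N -> (n.+1 * kappa < #|I|)%N ->
  exists l, (kappa < #|[pred i | niche i == l]|)%N.
Proof.
move=> niche_le card_gt.
have [/existsP[l overfull]|/existsPn all_le] :=
  boolP [exists l : 'I_n.+1, kappa < #|[pred i | niche i == l]|]%N; first by exists (nat_of_ord l).
suff : (#|I| <= n.+1 * kappa)%N by rewrite leqNgt card_gt.
rewrite -sum1_card (partition_big (fun i => inord (niche i) : 'I_n.+1) xpredT) //=.
apply: (@leq_trans (\sum_(l < n.+1) kappa)); last by rewrite sum_nat_const card_ord mulnC.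
apply: leq_sum => l _; rewrite sum1_card.
apply: leq_trans (_ : _ <= #|[pred i | niche i == l]|)%N _.
  apply: subset_leq_card; apply/subsetP => i; rewrite !inE => /eqP <-.
  by rewrite /= inordK // ltnS.
by rewrite leqNgt; apply: all_le.
Qed.

Lemma ones_le (n : nat) (x : bits n) : (ones x <= n)%N.
Proof. by rewrite /ones -{2}(size_tuple x) count_size. Qed.

Lemma pheno_dist_lt1 (n : nat) (x y : bits n) : (pheno_dist x y < 1) = (ones x == ones y).
Proof.
rewrite /pheno_dist; case: (ltngtP (ones x) (ones y)) => [xy|yx|->]; last first.
  by rewrite subrr normr0 ltr01.
all: apply/negbTE; rewrite -leNgt ler_normr.
- by move: yx; rewrite -(ler_nat R) -natr1 => ?; apply/orP; left; lra.
- by move: xy; rewrite -(ler_nat R) -natr1 => ?; apply/orP; right; lra.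
Qed.

Lemma lftE (mu : nat) (j : 'I_mu) : lft j = lift ord_max j.
Proof. by apply: val_inj; rewrite /= /bump leqNgt ltn_ord. Qed.

Lemma ord_maxVlft (mu : nat) (k : 'I_mu.+1) : k = ord_max \/ exists j, k = lft j.
Proof.
by case: (unliftP ord_max k) => [j ->|->]; [right; exists j; rewrite lftE | left].
Qed.

Lemma extend_lft (n mu : nat) (P : pop n mu) (y : bits n) (j : 'I_mu) : extend P y (lft j) = P j.
Proof. by rewrite ffunE lftE liftK. Qed.

Lemma extend_max (n mu : nat) (P : pop n mu) (y : bits n) : extend P y ord_max = y.
Proof. by rewrite ffunE unlift_none. Qed.

Section ClearingNiches.
Variables (T : Type) (m : nat) (d : T -> T -> R) (sigma : R) (kappa : nat)
  (Q : 'I_m -> T) (niche : 'I_m -> nat).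
Hypothesis d_lt_sigma : forall i j, (d (Q i) (Q j) < sigma) = (niche i == niche j).

Definition clear_step (i : 'I_m) (st : nat * {ffun 'I_m -> R}) (j : 'I_m) :=
  let: (w, c) := st in
  if (0 < c j) && (d (Q i) (Q j) < sigma) then
    if (w.+1 <= kappa)%N then (w.+1, c)
    else (w, [ffun k => if k == j then 0 else c k])
  else st.

Lemma clear_innerE (i : 'I_m) (js : seq 'I_m) (cf : {ffun 'I_m -> R}) :
  clear_inner d sigma kappa Q i js cf = (foldl (clear_step i) (1%N, cf) js).2.
Proof. by []. Qed.

Lemma clear_steps_value (i : 'I_m) (js : seq 'I_m) (w : nat) (c : {ffun 'I_m -> R}) (k : 'I_m) :
  let r := (foldl (clear_step i) (w, c) js).2 in r k = c k \/ r k = 0.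
Proof.
elim: js w c => [|j js IH] w c /=; first by left.
rewrite {1}/clear_step; case: ifP => _; last exact: IH.
case: ifP => _; first exact: IH.
have [->|] := IH w [ffun k0 => if k0 == j then 0 else c k0]; last by right.
by rewrite ffunE; case: eqP; [right | left].
Qed.

Lemma clear_steps_changed (i : 'I_m) (js : seq 'I_m) (w : nat) (c : {ffun 'I_m -> R}) (k : 'I_m) :
  (foldl (clear_step i) (w, c) js).2 k <> c k -> k \in js /\ niche k = niche i.
Proof.
elim: js w c => [//|j js IH] w c /=.
rewrite {1}/clear_step in_cons; case: ifP => [/andP[_]|_]; last first.
  by move=> /IH[-> ->]; rewrite orbT.
rewrite d_lt_sigma eq_sym => /eqP nj; case: ifP => _.
  by move=> /IH[-> ->]; rewrite orbT.
set c' := [ffun _ => _].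
have [e|/eqP/IH[-> ->] _] := eqVneq ((foldl (clear_step i) (w, c') js).2 k) (c' k);
  last by rewrite orbT.
rewrite e /c' ffunE; case: eqP => [-> _|//].
by split.
Qed.

Lemma clear_steps_overfull (i : 'I_m) (js : seq 'I_m) (w : nat) (c : {ffun 'I_m -> R}) :
  (w <= kappa)%N ->
  (kappa < w + count (fun j => (0 < c j)%R && (niche i == niche j)) js)%N ->
  exists k, niche k = niche i /\ (foldl (clear_step i) (w, c) js).2 k = 0.
Proof.
elim: js w c => [|j js IH] w c /=; first by rewrite addn0 => /leq_ltn_trans/[apply]; rewrite ltnn.
rewrite {1}/clear_step d_lt_sigma => w_le.
case: ifP => [/andP[_ /eqP nj]|_]; last by rewrite add0n; apply: IH.
case: ifP => [w_lt|_ _]; first by rewrite add1n addnS -addSn; apply: IH.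
exists j; split=> //.
have [->|->//] := clear_steps_value i js w [ffun k => if k == j then 0 else c k] j.
by rewrite ffunE eqxx.
Qed.

Lemma clear_outer_value (ord : seq 'I_m) (cf : {ffun 'I_m -> R}) (k : 'I_m) :
  let r := clear_outer d sigma kappa Q ord cf in r k = cf k \/ r k = 0.
Proof.
elim: ord cf => [|i ord IH] cf /=; first by left.
case: ifP => _; last exact: IH.
rewrite clear_innerE; have [<-|] := clear_steps_value i ord 1 cf k; first exact: IH.
by have [-> ->|->] := IH (foldl (clear_step i) (1%N, cf) ord).2; right.
Qed.

Lemma clear_outer_changed (ord : seq 'I_m) (cf : {ffun 'I_m -> R}) (k : 'I_m) :
  uniq ord -> clear_outer d sigma kappa Q ord cf k <> cf k ->
  exists2 i, i != k & niche i = niche k.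
Proof.
elim: ord cf => [//|i ord IH] cf /= /andP[i_notin uniq_ord].
set cf' := (if _ then _ else _).
have [e|cf'_k] := eqVneq (cf' k) (cf k); first by rewrite -e; apply: IH.
move: cf'_k; rewrite /cf'; case: ifP => [_|]; last by rewrite eqxx.
rewrite clear_innerE => /eqP/clear_steps_changed[k_in nk] _.
by exists i => //; apply: contraNneq i_notin => ->.
Qed.

Lemma clear_outer_overfull (ord : seq 'I_m) (cf : {ffun 'I_m -> R}) (l : nat) :
  (0 < kappa)%N ->
  (kappa < count (fun j => (0 < cf j)%R && (niche j == l)) ord)%N ->
  exists k, niche k = l /\ clear_outer d sigma kappa Q ord cf k = 0.
Proof.
move=> kappa_gt0; elim: ord cf => [//|i ord IH] cf /=.
set cf' := (if _ then _ else _).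
have [/andP[cf_i /eqP <-]|not_i] := boolP ((0 < cf i) && (niche i == l)).
  rewrite add1n ltnS => overfull.
  have [k [nk cf'_k]] : exists k, niche k = niche i /\ cf' k = 0.
    rewrite /cf' cf_i clear_innerE; apply: clear_steps_overfull => //.
    rewrite add1n ltnS; apply: leq_trans overfull _.
    by apply: sub_count => j /andP[-> /eqP->]; rewrite eqxx.
  exists k; split=> //.
  by have [->|->] := clear_outer_value ord cf' k.
rewrite add0n => overfull; apply: IH; rewrite (leq_trans overfull) // leq_eqVlt; apply/orP; left.
apply/eqP/eq_count => j; have [nj|] := eqVneq (niche j) l; last by rewrite !andbF.
rewrite !andbT /cf'; case: ifP => cf_i //; rewrite clear_innerE.
have [->//|/eqP/clear_steps_changed[_ nji]] :=
  eqVneq ((foldl (clear_step i) (1%N, cf) ord).2 j) (cf j).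
by move: not_i; rewrite cf_i -nji nj eqxx.
Qed.

End ClearingNiches.

Section Replacement.
Variables (n mu kappa : nat) (u : nat -> R) (tb : xpop n mu -> seq 'I_mu.+1).
Hypotheses (u_gt0 : forall k, (k <= n)%N -> 0 < u k) (kappa_gt0 : (0 < kappa)%N)
  (mu_ge : (n.+1 * kappa <= mu)%N) (tb_sorted : valid_sort u tb).

Lemma mu_gt0 : (0 < mu)%N.
Proof. by apply: leq_trans mu_ge; rewrite muln_gt0 kappa_gt0. Qed.

Variables (P : pop n mu) (y : bits n).
Let Q := extend P y.
Let c := cleared kappa u tb P y.

Let level (k : 'I_mu.+1) := ones (Q k).

Let pheno_dist_Q_lt1 i j : (pheno_dist (Q i) (Q j) < 1) = (level i == level j).
Proof. exact: pheno_dist_lt1. Qed.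

Let fitQ : {ffun 'I_mu.+1 -> R} := [ffun k => unit_fun u (Q k)].

Let clearedE : c = clear_outer pheno_dist 1 kappa Q (tb Q) fitQ.
Proof. by []. Qed.

Let fitQ_gt0 (k : 'I_mu.+1) : 0 < fitQ k.
Proof. by rewrite ffunE; apply/u_gt0/ones_le. Qed.

Lemma cleared_value k : c k = unit_fun u (Q k) \/ c k = 0.
Proof.
by have := clear_outer_value pheno_dist 1 kappa Q (tb Q) fitQ k; rewrite -clearedE ffunE.
Qed.

Lemma cleared_ge0 k : 0 <= c k.
Proof. by have [->|->] := cleared_value k; last exact: lexx; exact/ltW/u_gt0/ones_le. Qed.

Lemma cleared_twin k : c k = 0 -> exists2 i, i != k & ones (Q i) = ones (Q k).
Proof.
move=> ck; have [tb_perm _] := tb_sorted Q.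
apply: (@clear_outer_changed _ _ _ _ kappa _ _ pheno_dist_Q_lt1 (tb Q) fitQ).
  by rewrite (perm_uniq tb_perm) enum_uniq.
by rewrite -clearedE ck => /esym; apply/eqP; rewrite gt_eqF.
Qed.

Lemma cleared_zero : exists k, c k = 0.
Proof.
have [l overfull] : exists l, (kappa < #|[pred k | ones (Q k) == l]|)%N.
  by apply: (overfull_niche (fun k => ones_le (Q k))); rewrite card_ord ltnS.
have [tb_perm _] := tb_sorted Q.
have [k [_ ck]] : exists k, ones (Q k) = l /\ c k = 0.
  apply: (clear_outer_overfull pheno_dist_Q_lt1) => //.
  rewrite (permP tb_perm) count_enumE (leq_trans overfull) //.
  by apply: subset_leq_card; apply/subsetP => k; rewrite inE unfold_in => ->; rewrite fitQ_gt0.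
by exists k.
Qed.

Lemma worst_card_gt0 : (0 < #|worst kappa u tb P y|)%N.
Proof.
apply/card_gt0P.
have [z _ z_min] :=
  @Order.TotalTheory.arg_minP _ _ _ (Ordinal mu_gt0) xpredT (fun j => c (lft j)) isT.
by exists z; rewrite inE; apply/forallP => j; apply: z_min.
Qed.

Lemma worst_replaced_cleared z : z \in worst kappa u tb P y ->
  c (lft z) <= c ord_max -> c (lft z) = 0.
Proof.
rewrite inE => /forallP z_min z_le; have [k ck] := cleared_zero.
apply/eqP; rewrite eq_le cleared_ge0 andbT -ck.
by case: (ord_maxVlft k) => [->|[j ->]].
Qed.

Lemma next_keeps_ones z : z \in worst kappa u tb P y ->
  forall j, exists j', ones (Defs.next kappa u tb P y z j') = ones (P j).
Proof.
move=> z_worst j; rewrite /Defs.next; case: ifP => [z_le|_]; last by exists j.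
have [jz|jz] := eqVneq j z; last by exists j; rewrite ffunE (negbTE jz).
have [i i_neq] := cleared_twin (worst_replaced_cleared z_worst z_le).
rewrite /Q extend_lft jz; case: (ord_maxVlft i) => [->|[j' ij']].
  by rewrite extend_max => <-; exists z; rewrite ffunE eqxx.
rewrite ij' extend_lft => <-; exists j'; rewrite ffunE ifN //.
by apply: contraNneq i_neq => j'z; rewrite ij' j'z.
Qed.

Lemma next_accepts_new_level z : z \in worst kappa u tb P y ->
  (forall j, ones (P j) != ones y) -> Defs.next kappa u tb P y z z = y.
Proof.
rewrite inE => /forallP z_min y_new.
have c_max_neq0 : c ord_max != 0.
  apply/eqP => /cleared_twin[i]; rewrite /Q extend_max.
  case: (ord_maxVlft i) => [-> /eqP//|[j ->] _]; rewrite extend_lft.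
  by apply/eqP; apply: y_new.
have [k ck] := cleared_zero.
case: (ord_maxVlft k) => [km|[j kj]]; first by move: c_max_neq0; rewrite -km ck eqxx.
have z_le : c (lft z) <= c ord_max.
  by apply: le_trans (z_min j) _; rewrite -kj ck cleared_ge0.
by rewrite /Defs.next z_le ffunE eqxx.
Qed.

End Replacement.

Section Mutation.
Variable n : nat.
Local Notation p := (n%:R^-1 : R).

Lemma mut_rate_ge0 : 0 <= p.
Proof. by rewrite invr_ge0. Qed.

Lemma mut_rate_le1 : p <= 1.
Proof. by case: n => [|m]; rewrite ?invr0 ?invf_le1 ?ler1n ?ltr0n. Qed.

Lemma ones_card (x : bits n) : ones x = #|[pred i | tnth x i]|.
Proof. by rewrite /ones -count_enumE -{1}(map_tnth_enum x) count_map. Qed.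

Lemma hamming_card (x y : bits n) : hamming x y = #|[pred i | tnth x i != tnth y i]|.
Proof.
rewrite /hamming -count_enumE -{1}(map_tnth_enum x) -{1}(map_tnth_enum y) zip_map.
by rewrite -map_comp count_map.
Qed.

Lemma card_predC_ord (a : pred 'I_n) : #|[predC a]| = (n - #|a|)%N.
Proof.
have a_le : (#|a| <= n)%N by rewrite -[X in (_ <= X)%N](card_ord n) max_card.
by apply/eqP; rewrite -(eqn_add2l #|a|) cardC card_ord subnKC.
Qed.

Lemma zeros_card (x : bits n) : #|[pred i | ~~ tnth x i]| = (n - ones x)%N.
Proof. by rewrite ones_card -card_predC_ord; apply: eq_card => i; rewrite !inE. Qed.

Lemma prod_if_card (a : pred 'I_n) (r s : R) :
  \prod_(i < n) (if a i then r else s) = r ^+ #|a| * s ^+ (n - #|a|).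
Proof.
rewrite (bigID a) /= -card_predC_ord.
rewrite (eq_bigr (fun _ => r)) => [|i -> //].
rewrite [X in _ * X](eq_bigr (fun _ => s)) => [|i ai]; last by rewrite ifN.
by rewrite !prodr_const.
Qed.

Lemma mutprobE (x y : bits n) :
  mutprob x y = \prod_(i < n) (if tnth x i != tnth y i then p else 1 - p).
Proof. by rewrite prod_if_card /mutprob hamming_card. Qed.

Lemma mutprob_ge0 (x y : bits n) : 0 <= mutprob x y.
Proof.
rewrite mutprobE; apply: prodr_ge0 => i _.
by case: ifP => _; rewrite ?subr_ge0 ?mut_rate_ge0 ?mut_rate_le1.
Qed.

Lemma sum_bits_ffun (F : bits n -> R) :
  \sum_(y : bits n) F y = \sum_(f : {ffun 'I_n -> bool}) F [tuple f i | i < n].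
Proof.
apply: (reindex (fun f : {ffun 'I_n -> bool} => [tuple f i | i < n])).
exists (fun t : bits n => [ffun i => tnth t i]) => [f _|t _].
  by apply/ffunP => i; rewrite ffunE tnth_mktuple.
by apply: eq_from_tnth => i; rewrite tnth_mktuple ffunE.
Qed.

Lemma mutprob_sum1 (x : bits n) : \sum_(y : bits n) mutprob x y = 1.
Proof.
rewrite sum_bits_ffun.
under eq_bigr => f _ do rewrite mutprobE.
under eq_bigr => f _ do under eq_bigr => i _ do rewrite tnth_mktuple.
rewrite -(bigA_distr_bigA (fun i b => if tnth x i != b then p else 1 - p)) /=.
apply: big1 => i _; rewrite (bigD1 true) //= (big_pred1 false); last by case.
by case: (tnth x i) => /=; ring.
Qed.

Definition flip (x : bits n) (i : 'I_n) : bits n :=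
  [tuple if j == i then ~~ tnth x j else tnth x j | j < n].

Lemma flip_inj (x : bits n) : injective (flip x).
Proof.
move=> i j /(congr1 (fun t => tnth t i)); rewrite !tnth_mktuple eqxx.
by case: eqP => // _; case: (tnth x i).
Qed.

Lemma mutprob_flip (x : bits n) i : mutprob x (flip x i) = p * (1 - p) ^+ n.-1.
Proof.
rewrite /mutprob; suff -> : hamming x (flip x i) = 1%N by rewrite expr1 subn1.
rewrite hamming_card -(card1 i); apply: eq_card => j; rewrite !inE tnth_mktuple.
by case: (eqVneq j i) => [->|]; case: (tnth x _).
Qed.

Lemma ones_flip (x : bits n) i :
  ones (flip x i) = if tnth x i then (ones x).-1 else (ones x).+1.
Proof.
rewrite !ones_card (cardD1 i) [in RHS](cardD1 i) !inE tnth_mktuple eqxx.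
have -> : #|[predD1 [pred j | tnth (flip x i) j] & i]| = #|[predD1 [pred j | tnth x j] & i]|.
  by apply: eq_card => j; rewrite !inE tnth_mktuple; case: eqP.
by case: (tnth x i).
Qed.

Lemma one_flip_prob_gt0 : (1 < n)%N -> 0 < p * (1 - p) ^+ n.-1.
Proof.
move=> n_gt1; rewrite mulr_gt0 ?invr_gt0 ?ltr0n 1?ltnW //.
by apply: lt_le_trans (one_subV_expn_ge n_gt1); rewrite invr_gt0 ltr0n.
Qed.

End Mutation.

Lemma sumr_mul_indicator (T : finType) (X : T) (phi : T -> R) :
  \sum_(t : T) (t == X)%:R * phi t = phi X.
Proof.
under eq_bigr => t _ do rewrite mulr_natl mulrb.
by rewrite -big_mkcond big_pred1_eq.
Qed.

Lemma sumr_mul_sum_swap (I T : finType) (A : pred I) (c : I -> R) (F : I -> T -> R)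
    (phi : T -> R) :
  \sum_(t : T) (\sum_(i in A) c i * F i t) * phi t = \sum_(i in A) c i * \sum_(t : T) F i t * phi t.
Proof.
under eq_bigr => t _ do rewrite mulr_suml.
rewrite exchange_big; apply: eq_bigr => i _.
by rewrite mulr_sumr; apply: eq_bigr => t _; rewrite mulrA.
Qed.

Lemma uniform_parent_expect_drop (n mu : nat) (P : pop n mu) (i0 : 'I_mu) (Y : {set bits n})
    (a c : R) : (0 < mu)%N ->
  \sum_(i < mu) mu%:R^-1 *
    \sum_(y : bits n) mutprob (P i) y * (a - (i == i0)%:R * ((y \in Y)%:R * c))
  = a - mu%:R^-1 * (c * \sum_(y in Y) mutprob (P i0) y).
Proof.
move=> mu_gt0.
have inner i : \sum_(y : bits n) mutprob (P i) y * (a - (i == i0)%:R * ((y \in Y)%:R * c)) =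
    a - (i == i0)%:R * (c * \sum_(y in Y) mutprob (P i) y).
  under eq_bigr => y _ do rewrite mulrBr.
  rewrite sumrB -mulr_suml mutprob_sum1 mul1r; congr (_ - _).
  rewrite mulr_sumr mulr_sumr [RHS]big_mkcond.
  by apply: eq_bigr => y _; case: (y \in Y); rewrite /= ?mul0r ?mulr0 //; ring.
under eq_bigr => i _ do rewrite inner mulrBr.
rewrite sumrB sumr_const card_ord; under eq_bigr => i _ do rewrite mulrCA.
by rewrite sumr_mul_indicator -[_ *+ mu]mulr_natr mulrAC mulVf ?mul1r // pnatr_eq0 -lt0n.
Qed.

Lemma natpow_expn (m k : nat) : Nat.pow m k = (m ^ k)%N.
Proof. by elim: k => // k IH; rewrite expnS -IH. Qed.

Section Kernel.
Variables (n mu kappa : nat) (u : nat -> R) (tb : xpop n mu -> seq 'I_mu.+1).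

Lemma kernel_ge0 (P P' : pop n mu) : 0 <= kernel kappa u tb P P'.
Proof.
apply: sumr_ge0 => i _; rewrite mulr_ge0 ?invr_ge0 //.
apply: sumr_ge0 => y _; rewrite mulr_ge0 ?mutprob_ge0 //.
by apply: sumr_ge0 => z _; rewrite mulr_ge0 ?invr_ge0 ?ler0n.
Qed.

Lemma kernel_expect (P : pop n mu) (phi : pop n mu -> R) :
  \sum_(P' : pop n mu) kernel kappa u tb P P' * phi P' =
  \sum_(i < mu) mu%:R^-1 * \sum_(y : bits n) mutprob (P i) y *
    \sum_(z in worst kappa u tb P y) #|worst kappa u tb P y|%:R^-1 *
      phi (Defs.next kappa u tb P y z).
Proof.
rewrite /kernel sumr_mul_sum_swap; apply: eq_bigr => i _; congr (_ * _).
rewrite sumr_mul_sum_swap; apply: eq_bigr => y _; congr (_ * _).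
rewrite sumr_mul_sum_swap; apply: eq_bigr => z _; congr (_ * _).
exact: sumr_mul_indicator.
Qed.

Lemma init_ge0 (P : pop n mu) : 0 <= init P.
Proof. by apply: prodr_ge0 => j _; rewrite invr_ge0. Qed.

Lemma q_ge0 t (P : pop n mu) : 0 <= q kappa u tb t P.
Proof.
elim: t P => [|t IH] P; rewrite ffunE; case: ifP => // _; first exact: init_ge0.
by apply: sumr_ge0 => P0 _; rewrite mulr_ge0 ?kernel_ge0.
Qed.

Lemma q_opt t (P : pop n mu) : has_opt u P -> q kappa u tb t P = 0.
Proof. by case: t => [|t]; rewrite ffunE => ->. Qed.

Theorem additive_drift (V : pop n mu -> R) :
  (forall P, 0 <= V P) ->
  (forall P, ~~ has_opt u P ->
     \sum_(P' : pop n mu) kernel kappa u tb P P' * V P' <= V P - 1) ->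
  forall N, partial_expect kappa u tb N <= \sum_(P : pop n mu) init P * V P.
Proof.
move=> V_ge0 V_drift N.
pose Phi t := \sum_(P : pop n mu) q kappa u tb t P * V P.
have Phi_ge0 t : 0 <= Phi t by apply: sumr_ge0 => P _; rewrite mulr_ge0 ?q_ge0.
have Phi_step t : Phi t.+1 <= Phi t - tail_prob kappa u tb t.
  apply: (@le_trans _ _ (\sum_(P' : pop n mu)
      (\sum_(P : pop n mu) q kappa u tb t P * kernel kappa u tb P P') * V P')).
    apply: ler_sum => P' _; rewrite ffunE; case: ifP => _ //.
    by rewrite mul0r mulr_ge0 // sumr_ge0 // => P _; rewrite mulr_ge0 ?q_ge0 ?kernel_ge0.
  rewrite sumr_mul_sum_swap /Phi /tail_prob -sumrB; apply: ler_sum => P _.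
  have [P_opt|P_nopt] := boolP (has_opt u P); first by rewrite q_opt // !mul0r subr0.
  by rewrite -[X in _ <= _ - X]mulr1 -mulrBr ler_wpM2l ?q_ge0 ?V_drift.
have Phi0 : Phi 0 <= \sum_(P : pop n mu) init P * V P.
  apply: ler_sum => P _; rewrite ffunE; case: ifP => _; last exact: lexx.
  by rewrite mul0r mulr_ge0 ?init_ge0.
suff : partial_expect kappa u tb N + Phi N <= Phi 0 by have := Phi_ge0 N; lra.
elim: N => [|N IH]; first by rewrite /partial_expect big_ord0 add0r.
rewrite /partial_expect big_ord_recr /= -/(partial_expect kappa u tb N).
by have := Phi_step N; lra.
Qed.

Lemma init_sum1 : \sum_(P : pop n mu) init P = 1.
Proof.
rewrite /init; under eq_bigr => P _ do rewrite prodr_const card_ord.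
rewrite sumr_const card_ffun card_tuple card_bool card_ord natpow_expn.
rewrite -[X in X = 1]mulr_natr [X in _ * X]natrX -exprMn mulVf ?expr1n //.
by rewrite pnatr_eq0 expn_eq0.
Qed.

End Kernel.

Section Potential.
Variables n mu : nat.
Local Notation p := (n%:R^-1 : R).

Definition single_flip_prob : R := p * (1 - p) ^+ n.-1 / mu%:R.

Lemma single_flip_prob_ge0 : 0 <= single_flip_prob.
Proof.
by rewrite mulr_ge0 ?invr_ge0 // mulr_ge0 ?mut_rate_ge0 // exprn_ge0 // subr_ge0 mut_rate_le1.
Qed.

Definition potential (k : nat) : R := \sum_(i < k) (i.+1%:R * single_flip_prob)^-1.

Lemma potentialS k : potential k.+1 = potential k + (k.+1%:R * single_flip_prob)^-1.
Proof. by rewrite /potential big_ord_recr. Qed.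

Lemma potential_ge0 k : 0 <= potential k.
Proof. by apply: sumr_ge0 => i _; rewrite invr_ge0 mulr_ge0 ?single_flip_prob_ge0. Qed.

Lemma potential_le k k' : (k <= k')%N -> potential k <= potential k'.
Proof.
apply: (@homo_leq _ _ (fun a b : R => a <= b) (@lexx _ _) (@le_trans _ _)) => {}k.
by rewrite potentialS lerDl invr_ge0 mulr_ge0 ?single_flip_prob_ge0.
Qed.

End Potential.

Section Drift.
Variables (n mu kappa : nat) (u : nat -> R) (tb : xpop n mu -> seq 'I_mu.+1).
Hypotheses (u_gt0 : forall k, (k <= n)%N -> 0 < u k) (kappa_gt0 : (0 < kappa)%N)
  (mu_ge : (n.+1 * kappa <= mu)%N) (tb_sorted : valid_sort u tb) (n_gt1 : (1 < n)%N).

Let mu_gt0 := mu_gt0 kappa_gt0 mu_ge.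
Let j0 : 'I_mu := Ordinal mu_gt0.

Lemma kernel_expect_le (P : pop n mu) (phi : pop n mu -> R) (g : 'I_mu -> bits n -> R) :
  (forall i y z, z \in worst kappa u tb P y -> phi (Defs.next kappa u tb P y z) <= g i y) ->
  \sum_(P' : pop n mu) kernel kappa u tb P P' * phi P' <=
  \sum_(i < mu) mu%:R^-1 * \sum_(y : bits n) mutprob (P i) y * g i y.
Proof.
move=> phi_le; rewrite kernel_expect; apply: ler_sum => i _.
apply: ler_wpM2l; first by rewrite invr_ge0.
apply: ler_sum => y _; apply: ler_wpM2l; first exact: mutprob_ge0.
set W := worst kappa u tb P y.
have W_weights : \sum_(z in W) #|W|%:R^-1 = 1 :> R.
  by rewrite sumr_const -[_ *+ _]mulr_natr mulVf // pnatr_eq0 -lt0n worst_card_gt0.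
rewrite -[g i y]mul1r -[X in X * g i y]W_weights mulr_suml; apply: ler_sum => z z_worst.
by apply: ler_wpM2l; [rewrite invr_ge0 | exact: phi_le].
Qed.

Definition opt_level : 'I_n.+1 := [arg max_(l > ord0) u l]%O.

Lemma u_le_opt_level (l : 'I_n.+1) : u l <= u opt_level.
Proof. by rewrite /opt_level; case: arg_maxP => // m _; apply. Qed.

Definition level_gap (x : bits n) : nat := (ones x - opt_level) + (opt_level - ones x).

Definition pop_gap (P : pop n mu) : nat := level_gap (P [arg min_(j < j0) level_gap (P j)]).

Lemma pop_gap_le (P : pop n mu) j : (pop_gap P <= level_gap (P j))%N.
Proof. by rewrite /pop_gap; case: arg_minnP => // i _; apply. Qed.

Lemma pop_gap_attained (P : pop n mu) : exists j, pop_gap P = level_gap (P j).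
Proof. by eexists. Qed.

Lemma level_gap_le (x : bits n) : (level_gap x <= n)%N.
Proof. by have := ones_le x; have := ltn_ord opt_level; rewrite /level_gap; lia. Qed.

Lemma pop_gap0_opt (P : pop n mu) : pop_gap P = 0%N -> has_opt u P.
Proof.
have [j ->] := pop_gap_attained P; rewrite /level_gap => gap0.
have opt_j : ones (P j) = opt_level by lia.
apply/existsP; exists j; apply/forallP => y; rewrite /unit_fun opt_j.
by have := u_le_opt_level (inord (ones y)); rewrite inordK // ltnS ones_le.
Qed.

(* The bits whose flip moves [ones x] towards [opt_level]: ones above it, zeros below it. *)
Definition improving (x : bits n) : {set 'I_n} := [set s | tnth x s == (opt_level < ones x)%N].

Lemma level_gap_le_card_improving (x : bits n) : (level_gap x <= #|improving x|)%N.
Proof.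
have := ones_le x; have := ltn_ord opt_level; rewrite /level_gap.
case: (ltnP opt_level (ones x)) => [lt|le].
  have -> : #|improving x| = ones x by rewrite ones_card; apply: eq_card => s; rewrite !inE lt.
  by lia.
have -> : #|improving x| = (n - ones x)%N.
  by rewrite -zeros_card; apply: eq_card => s; rewrite !inE ltnNge le; case: (tnth x s).
by lia.
Qed.

Lemma level_gap_flip_improving (x : bits n) s : s \in improving x ->
  (0 < level_gap x)%N -> level_gap (flip x s) = (level_gap x).-1.
Proof.
rewrite inE => /eqP xs; have := ones_le x; have := ltn_ord opt_level.
rewrite /level_gap ones_flip xs; case: (ltnP opt_level (ones x)); lia.
Qed.

Lemma pop_gap_next_le (P : pop n mu) y z : z \in worst kappa u tb P y ->
  (pop_gap (Defs.next kappa u tb P y z) <= pop_gap P)%N.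
Proof.
move=> z_worst; have [j ->] := pop_gap_attained P.
have [j' ones_j'] := next_keeps_ones u_gt0 kappa_gt0 mu_ge tb_sorted z_worst j.
by apply: leq_trans (pop_gap_le _ j') _; rewrite /level_gap ones_j'.
Qed.

Lemma pop_gap_next_improving (P : pop n mu) i s z :
  pop_gap P = level_gap (P i) -> (0 < pop_gap P)%N -> s \in improving (P i) ->
  z \in worst kappa u tb P (flip (P i) s) ->
  (pop_gap (Defs.next kappa u tb P (flip (P i) s) z) <= (pop_gap P).-1)%N.
Proof.
move=> gap_i gap_gt0 s_impr z_worst.
have gap_flip : level_gap (flip (P i) s) = (pop_gap P).-1.
  by rewrite gap_i level_gap_flip_improving // -gap_i.
have new_level j : ones (P j) != ones (flip (P i) s).
  apply/eqP => same; have := pop_gap_le P j.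
  have -> : level_gap (P j) = level_gap (flip (P i) s) by rewrite /level_gap same.
  by rewrite gap_flip; lia.
apply: leq_trans (pop_gap_le _ z) _.
by rewrite (next_accepts_new_level u_gt0 kappa_gt0 mu_ge tb_sorted z_worst new_level) gap_flip.
Qed.

Local Notation p := (n%:R^-1 : R).
Local Notation single_flip_prob := (single_flip_prob n mu).
Local Notation potential := (potential n mu).

Lemma potential_drift (P : pop n mu) : ~~ has_opt u P ->
  \sum_(P' : pop n mu) kernel kappa u tb P P' * potential (pop_gap P') <=
  potential (pop_gap P) - 1.
Proof.
move=> P_nopt; set k := pop_gap P.
have k_gt0 : (0 < k)%N by rewrite lt0n; apply: contra P_nopt => /eqP/pop_gap0_opt.
have [i0 gap_i0] := pop_gap_attained P; set x := P i0 in gap_i0.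
set Y := flip x @: improving x; set c := (k%:R * single_flip_prob)^-1.
pose g i y := potential k - (i == i0)%:R * ((y \in Y)%:R * c).
apply: (le_trans (kernel_expect_le (g := g) _)).
  move=> i y z; rewrite /g.
  have [/andP[/eqP-> /imsetP[s s_impr ->]] z_worst|/nandP not_both z_worst] :=
    boolP ((i == i0) && (y \in Y)).
    rewrite eqxx (imset_f (flip x) s_impr) !mul1r /c -{1}(prednK k_gt0) potentialS prednK // addrK.
    exact/potential_le/(pop_gap_next_improving gap_i0).
  rewrite [_ * _](_ : _ = 0) ?subr0; last first.
    by case: not_both => /negbTE->; rewrite ?mul0r ?mulr0.
  by apply: potential_le; apply: pop_gap_next_le.
rewrite /g uniform_parent_expect_drop // -/x.
have sumY : \sum_(y in Y) mutprob x y = #|improving x|%:R * (p * (1 - p) ^+ n.-1).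
  rewrite (big_imset _ (in2W (@flip_inj _ x))) /=.
  by under eq_bigr => s _ do rewrite mutprob_flip; rewrite sumr_const mulr_natl.
have card_ge : k%:R <= #|improving x|%:R :> R.
  by rewrite ler_nat /k gap_i0; apply: level_gap_le_card_improving.
rewrite sumY /c (_ : single_flip_prob = p * (1 - p) ^+ n.-1 / mu%:R) //.
have k_gt0R : 0 < k%:R :> R by rewrite ltr0n.
have mu_gt0R : 0 < mu%:R :> R by rewrite ltr0n.
move: (p * _) (one_flip_prob_gt0 n_gt1) => q q_gt0.
rewrite lerD2l lerN2 (_ : _ * _ = #|improving x|%:R / k%:R); last by field; rewrite !gt_eqF.
by rewrite ler_pdivlMr // mul1r.
Qed.

Lemma partial_expect_le_potential N : partial_expect kappa u tb N <= potential n.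
Proof.
have V_ge0 (P : pop n mu) : 0 <= potential (pop_gap P) by apply: potential_ge0.
apply: le_trans (additive_drift V_ge0 potential_drift N) _.
rewrite -[potential n]mul1r -(init_sum1 n mu) mulr_suml; apply: ler_sum => P _.
by apply: ler_wpM2l; [exact: init_ge0 | exact/potential_le/level_gap_le].
Qed.

End Drift.

Lemma potential_le_mu_n_ln (n mu : nat) : (0 < mu)%N -> (3 <= n)%N ->
  potential n mu n <= 6%:R * mu%:R * n%:R * ln (n%:R).
Proof.
move=> mu_gt0 n_ge3; have n_gt1 : (1 < n)%N by apply: leq_trans n_ge3.
have ln_ge1 : 1 <= ln (n%:R) by apply: le_trans ln3_ge1 _; apply: ler_ln; rewrite ?ler_nat.
have harmonic : \sum_(i < n) (i.+1%:R : R)^-1 <= 2%:R * ln (n%:R).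
  by apply: le_trans (harmonic_le_1Dln (ltnW n_gt1)) _; rewrite -natr1 mulrDl mul1r lerD2r.
have inv_prob : (single_flip_prob n mu)^-1 <= 3%:R * mu%:R * n%:R.
  rewrite (_ : single_flip_prob n mu = n%:R^-1 * (1 - n%:R^-1) ^+ n.-1 / mu%:R) //.
  move: ((1 - n%:R^-1) ^+ n.-1) (one_subV_expn_ge n_gt1) => q q_ge.
  have q_gt0 : 0 < q by apply: lt_le_trans q_ge; rewrite invr_gt0 ltr0n.
  have q_inv : q^-1 <= 3%:R by rewrite -[3%:R]invrK lef_pV2 ?posrE ?invr_gt0 ?ltr0n.
  have -> : (n%:R^-1 * q / mu%:R)^-1 = mu%:R * n%:R * q^-1.
    by field; rewrite !gt_eqF ?ltr0n ?(ltnW n_gt1).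
  have mn_ge0 : 0 <= mu%:R * n%:R :> R by rewrite mulr_ge0 ?ler0n.
  nra.
have inv_ge0 : 0 <= (single_flip_prob n mu)^-1 by rewrite invr_ge0 single_flip_prob_ge0.
rewrite /potential; under eq_bigr => i _ do rewrite invfM mulrC.
rewrite -mulr_sumr; apply: le_trans (ler_wpM2l inv_ge0 harmonic) _.
apply: le_trans (ler_wpM2r _ inv_prob) _; first by rewrite mulr_ge0 ?ler0n ?(le_trans ler01).
by rewrite le_eqVlt; apply/orP; left; apply/eqP; ring.
Qed.

Theorem theorem1 :
  exists C : R, 0 < C /\ exists n0 : nat,
  forall (n : nat), (n0 <= n)%nat ->
  forall (u : nat -> R), (forall k, (k <= n)%nat -> 0 < u k) ->
  forall (kappa mu : nat), (1 <= kappa)%nat -> (n.+1 * kappa <= mu)%nat ->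
  forall tb : xpop n mu -> seq 'I_mu.+1, valid_sort u tb ->
  forall N : nat,
    partial_expect kappa u tb N <= C * mu%:R * n%:R * Rpower.ln n%:R.
Proof.
exists 6%:R; split; first by rewrite ltr0n.
exists 3%N => n n_ge3 u u_gt0 kappa mu kappa_gt0 mu_ge tb tb_sorted N.
have n_gt1 : (1 < n)%N by apply: leq_trans n_ge3.
apply: le_trans (partial_expect_le_potential u_gt0 kappa_gt0 mu_ge tb_sorted n_gt1 N) _.
exact: potential_le_mu_n_ln (mu_gt0 kappa_gt0 mu_ge) n_ge3.
Qed.
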